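(* Let $\mathcal{H}=(V,H,\bm{w})$ be a finite, connected, weighted undirected hypergraph in which every hyperedge has at least two vertices. Then for any two distinct vertices $u,v\in V$ and any hyperedge $h\in H$, the functions $\alpha\mapsto\kappa_\alpha(u,v)$ and $\alpha\mapsto\kappa_\alpha(h)$ are concave on $[0,1]$.
   Context: A weighted undirected hypergraph $\mathcal{H}=(V,H,\bm{w})$ has a finite vertex set $V$, a finite set $H$ of hyperedges (subsets of $V$), and positive weights $w_h>0$ for $h\in H$. Distinct vertices $u,v$ are adjacent ($u\sim v$) if some hyperedge contains both; $\Gamma(x)=\{z\in V: z\sim x\}$. The degree is $\mathrm{Deg}(x)=\sum_{h\ni x}w_h$. A hyperpath connecting $u$ and $v$ is a sequence of hyperedges $h_1,\dots,h_l$ with $u\in h_1$, $v\in h_l$, $h_j\cap h_{j+1}\neq\emptyset$ for $1\le j\le l-1$; $\mathcal{H}$ is connected if every two distinct vertices are connected by a hyperpath. For $u\neq v$, $d(u,v)=\inf_\gamma\sum_{h\in\gamma}w_h$ over hyperpaths $\gamma$ connecting $u,v$, and $d(u,u)=0$. For a hyperedge $h=\{x_1,\dots,x_k\}$, $L(h)=\min_{1\le i<j\le k}d(x_i,x_j)$. For probability measures $\mu,\nu$ on $V$, $W(\mu,\nu)=\inf_\pi\sum_{x,y\in V}\pi(x,y)d(x,y)$, the infimum over couplings $\pi$ of $\mu,\nu$ (probability measures on $V\times V$ with marginals $\mu$ and $\nu$). For $\alpha\in[0,1]$ and $x\in V$, the measure $\mu_x^\alpha$ is: $\mu_x^\alpha(x)=\alpha$;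 $\mu_x^\alpha(z)=(1-\alpha)\sum_{h'\in H:\,x,z\in h'}\frac{1}{|h'|-1}\frac{w_{h'}}{\mathrm{Deg}(x)}$ for $z\in\Gamma(x)$; and $0$ otherwise. For distinct $u,v$, $\kappa_\alpha(u,v)=1-\frac{W(\mu_u^\alpha,\mu_v^\alpha)}{d(u,v)}$. For $h=\{x_1,\dots,x_k\}$, $W_\alpha(h)=\sum_{1\le i<j\le k}W(\mu_{x_i}^\alpha,\mu_{x_j}^\alpha)$ and $\kappa_\alpha(h)=1-\frac{W_\alpha(h)}{L(h)}$. *)

From mathcomp Require Import all_boot all_order all_algebra.
From mathcomp Require Import boolp classical_sets reals.
Set Implicit Arguments. Unset Strict Implicit. Unset Printing Implicit Defensive.
Import Order.TTheory GRing.Theory Num.Theory.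
Local Open Scope ring_scope.
Local Open Scope classical_set_scope.

Section Hypergraph.
Variables (R : realType) (V : finType).
(* A weighted hypergraph: the set of hyperedges H (subsets of V) and the
   weight function w (only its values on H matter). *)
Variables (H : {set {set V}}) (w : {set V} -> R).

Definition weights_pos : Prop := forall h, h \in H -> 0 < w h.
Definition edges_ge2 : Prop := forall h, h \in H -> (2 <= #|h|)%N.

Definition adjacent (u v : V) : bool :=
  (u != v) && [exists h in H, (u \in h) && (v \in h)].

Definition Deg (x : V) : R := \sum_(h in H | x \in h) w h.

Definition hyperpath (u v : V) (s : seq {set V}) : bool :=
  [&& s != [::], all (fun h => h \in H) s, u \in head (finset.set0 : {set V}) s, v \in last (finset.set0 : {set V}) s
    & path (fun a b => a :&: b != (finset.set0 : {set V})) (head (finset.set0 : {set V}) s) (behead s)].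

Definition connected_hg : Prop :=
  forall u v : V, u != v -> exists s, hyperpath u v s.

Definition dist (u v : V) : R :=
  if u == v then 0
  else inf [set r : R | exists s, hyperpath u v s /\ r = \sum_(h <- s) w h].

Definition Lh (h : {set V}) : R :=
  inf [set r : R | exists x y, [/\ x \in h, y \in h, x != y & r = dist x y]].

Definition coupling (mu nu : V -> R) (pi : V * V -> R) : Prop :=
  [/\ forall p, 0 <= pi p,
      forall x, \sum_(y : V) pi (x, y) = mu x
    & forall y, \sum_(x : V) pi (x, y) = nu y].

Definition W1 (mu nu : V -> R) : R :=
  inf [set r : R | exists pi : V * V -> R,
         coupling mu nu pi /\ r = \sum_(p : V * V) pi p * dist p.1 p.2].

Definition mu_meas (alpha : R) (x : V) (z : V) : R :=
  if z == x then alpha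
  else if adjacent x z then
    (1 - alpha) * \sum_(h' in H | (x \in h') && (z \in h'))
                     ((#|h'|%:R - 1)^-1 * (w h' / Deg x))
  else 0.

Definition kappa_vert (alpha : R) (u v : V) : R :=
  1 - W1 (mu_meas alpha u) (mu_meas alpha v) / dist u v.

(* sum over unordered pairs {x_i, x_j}, i < j, via the enumeration order of V *)
Definition W_edge (alpha : R) (h : {set V}) : R :=
  \sum_(x in h) \sum_(y in h | (enum_rank x < enum_rank y)%N)
     W1 (mu_meas alpha x) (mu_meas alpha y).

Definition kappa_edge (alpha : R) (h : {set V}) : R :=
  1 - W_edge alpha h / Lh h.

End Hypergraph.

Definition concave_on01 (R : realType) (f : R -> R) : Prop :=
  forall a b t : R, 0 <= a <= 1 -> 0 <= b <= 1 -> 0 <= t <= 1 ->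
    (1 - t) * f a + t * f b <= f ((1 - t) * a + t * b).

From mathcomp Require Import all_boot all_order all_algebra.
From mathcomp Require Import boolp classical_sets reals.
From mathcomp Require Import ring lra zify.
Set Implicit Arguments. Unset Strict Implicit. Unset Printing Implicit Defensive.
Import Order.TTheory GRing.Theory Num.Theory.
Local Open Scope ring_scope.

(* The measures mu_x^alpha depend affinely on alpha, and a convex combination
   of couplings is a coupling of the convex combination of the marginals, so
   the transport cost alpha |-> W(mu_u^alpha, mu_v^alpha) is convex on [0,1].
   Both curvatures have the form 1 - (a sum of such convex functions) / d with
   d >= 0 independent of alpha, hence are concave. *)

Definition convex_on01 (R : realType) (f : R -> R) : Prop :=
  forall a b t : R, 0 <= a <= 1 -> 0 <= b <= 1 -> 0 <= t <= 1 ->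
    f ((1 - t) * a + t * b) <= (1 - t) * f a + t * f b.

Lemma convex_on01_sum (R : realType) (I : Type) (r : seq I) (P : pred I)
    (F : I -> R -> R) :
  (forall i, P i -> convex_on01 (F i)) ->
  convex_on01 (fun a => \sum_(i <- r | P i) F i a).
Proof.
move=> Fconv a b t ha hb ht; rewrite !mulr_sumr -big_split /=.
by apply: ler_sum => i Pi; exact: Fconv.
Qed.

Lemma concave_on01_one_sub_div (R : realType) (f : R -> R) (d : R) :
  0 <= d -> convex_on01 f -> concave_on01 (fun a => 1 - f a / d).
Proof.
move=> d0 fconv a b t ha hb ht /=.
have : f ((1 - t) * a + t * b) / d <= ((1 - t) * f a + t * f b) / d.
  by apply: ler_wpM2r; [rewrite invr_ge0 | exact: fconv].
suff -> : ((1 - t) * f a + t * f b) / d =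
          1 - ((1 - t) * (1 - f a / d) + t * (1 - f b / d)) by lra.
by ring.
Qed.

Lemma inf_ge0 (R : realType) (E : set R) :
  (forall r, E r -> 0 <= r) -> 0 <= inf E.
Proof.
move=> E0; have [[E_ne _]|noinf] := pselect (has_inf E); last by rewrite inf_out.
by apply: lb_le_inf => // r /E0.
Qed.

Section Couplings.
Variables (R : realType) (V : finType).
Implicit Types (mu nu : V -> R) (pi : V * V -> R).

Definition prob mu : Prop := (forall z, 0 <= mu z) /\ \sum_z mu z = 1.

Lemma coupling_prod mu nu :
  prob mu -> prob nu -> coupling mu nu (fun p => mu p.1 * nu p.2).
Proof.
move=> [mu0 mu1] [nu0 nu1]; split.
- by move=> p; apply: mulr_ge0.
- by move=> x; rewrite /= -mulr_sumr nu1 mulr1.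
- by move=> y; rewrite /= -mulr_suml mu1 mul1r.
Qed.

Lemma coupling_convex mu1 nu1 pi1 mu2 nu2 pi2 (t : R) : 0 <= t <= 1 ->
  coupling mu1 nu1 pi1 -> coupling mu2 nu2 pi2 ->
  coupling (fun z => (1 - t) * mu1 z + t * mu2 z)
           (fun z => (1 - t) * nu1 z + t * nu2 z)
           (fun p => (1 - t) * pi1 p + t * pi2 p).
Proof.
move=> /andP[t0 t1] [pi1_ge0 pi1_l pi1_r] [pi2_ge0 pi2_l pi2_r]; split.
- by move=> p; apply: addr_ge0; apply: mulr_ge0 => //; lra.
- by move=> x; rewrite big_split /= -!mulr_sumr pi1_l pi2_l.
- by move=> y; rewrite big_split /= -!mulr_sumr pi1_r pi2_r.
Qed.

End Couplings.

Section Hypergraph.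
Variables (R : realType) (V : finType) (H : {set {set V}}) (w : {set V} -> R).
Hypothesis w_gt0 : weights_pos H w.
Hypothesis card_edge_ge2 : edges_ge2 H.

Definition covered (x : V) : Prop := exists2 h, h \in H & x \in h.

Lemma hyperpath_covered u v s :
  hyperpath H u v s -> covered u /\ covered v.
Proof.
case: s => [|h s] /and5P[// _ hsH uh vl _].
have hH : h \in H by case/andP: hsH.
split; first by exists h.
by exists (last h s); first exact: (allP hsH _ (mem_last h s)).
Qed.

Lemma dist_ge0 x y : 0 <= dist H w x y.
Proof.
rewrite /dist; case: eqP => // _; apply: inf_ge0 => _ [s [/and5P[_ sH _ _ _] ->]].
rewrite big_seq; apply: sumr_ge0 => h hs; apply/ltW/w_gt0.
exact: (allP sH).
Qed.

Lemma Lh_ge0 h : 0 <= Lh H w h.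
Proof. by apply: inf_ge0 => _ [x [y [_ _ _ ->]]]; exact: dist_ge0. Qed.

Lemma Deg_ge0 x : 0 <= Deg H w x.
Proof. by apply: sumr_ge0 => h /andP[hH _]; exact/ltW/w_gt0. Qed.

Lemma Deg_gt0 x : covered x -> 0 < Deg H w x.
Proof.
case=> h hH xh; rewrite /Deg (bigD1 h) /=; last by rewrite hH xh.
rewrite ltr_wpDr ?w_gt0 //; apply: sumr_ge0 => h' /andP[/andP[h'H _] _].
exact/ltW/w_gt0.
Qed.

Lemma mu_meas_ge0 alpha x z : 0 <= alpha <= 1 -> 0 <= mu_meas H w alpha x z.
Proof.
move=> /andP[a0 a1]; rewrite /mu_meas; case: eqP => // _; case: ifP => // _.
apply: mulr_ge0; first lra.
apply: sumr_ge0 => h /andP[hH _]; apply: mulr_ge0.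
  by rewrite invr_ge0 subr_ge0 ler1n; have := card_edge_ge2 hH; lia.
by apply: divr_ge0; [exact/ltW/w_gt0 | exact: Deg_ge0].
Qed.

Lemma mu_meas_affine a b t x z :
  mu_meas H w ((1 - t) * a + t * b) x z =
  (1 - t) * mu_meas H w a x z + t * mu_meas H w b x z.
Proof. by rewrite /mu_meas; case: eqP => _; [|case: ifP => _]; ring. Qed.

(* Each hyperedge h' containing x spreads the mass w h' / Deg x evenly over
   the |h'| - 1 other vertices of h'. *)
Lemma mu_meas_sum1 alpha x : covered x -> \sum_z mu_meas H w alpha x z = 1.
Proof.
move=> xcov; have Deg_neq0 : Deg H w x != 0 by rewrite gt_eqF ?Deg_gt0.
set c := fun h : {set V} => (#|h|%:R - 1)^-1 * (w h / Deg H w x).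
have off_x z : z != x -> mu_meas H w alpha x z =
    (1 - alpha) * \sum_(h in H | (x \in h) && (z \in h)) c h.
  move=> zx; rewrite /mu_meas (negbTE zx); case: ifP => // nadj.
  rewrite big1 ?mulr0 // => h /andP[hH /andP[xh zh]].
  move/negbT: nadj; rewrite /adjacent eq_sym zx /=; case/existsP.
  by exists h; rewrite hH xh zh.
rewrite (bigD1 x) //= {1}/mu_meas eqxx (eq_bigr _ off_x) -mulr_sumr.
suff -> : \sum_(z | z != x) \sum_(h in H | (x \in h) && (z \in h)) c h = 1.
  by ring.
rewrite (exchange_big_dep (fun h => (h \in H) && (x \in h))) /=; last first.
  by move=> z h _ /andP[-> /andP[-> _]].
transitivity (\sum_(h in H | x \in h) w h / Deg H w x); last first.
  by rewrite -mulr_suml divff.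
apply: eq_bigr => h /andP[hH xh]; have h_ge2 := card_edge_ge2 hH.
rewrite (eq_bigl (fun z => z \in h :\ x)); last first.
  by move=> z; rewrite in_setD1 hH xh.
rewrite sumr_const.
have -> : #|h :\ x| = (#|h| - 1)%N by rewrite (cardsD1 x h) xh; lia.
rewrite /c -[X in X = _]mulr_natr natrB; last by lia.
by rewrite mulrC mulrA mulfV ?mul1r // subr_eq0 pnatr_eq1; lia.
Qed.

Lemma mu_meas_prob alpha x :
  covered x -> 0 <= alpha <= 1 -> prob (mu_meas H w alpha x).
Proof.
by move=> xcov a01; split=> [z|]; [exact: mu_meas_ge0 | exact: mu_meas_sum1].
Qed.

Local Open Scope classical_set_scope.

Definition transport_costs (mu nu : V -> R) : set R :=
  [set r | exists pi, coupling mu nu pi /\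
                      r = \sum_(p : V * V) pi p * dist H w p.1 p.2].

Lemma transport_costs_ge0 mu nu r : transport_costs mu nu r -> 0 <= r.
Proof.
move=> [pi [[pi_ge0 _ _] ->]]; apply: sumr_ge0 => p _.
by apply: mulr_ge0 => //; exact: dist_ge0.
Qed.

Lemma transport_costs_has_inf mu nu :
  prob mu -> prob nu -> has_inf (transport_costs mu nu).
Proof.
move=> pmu pnu; split; last by exists 0 => r /transport_costs_ge0.
exists (\sum_(p : V * V) mu p.1 * nu p.2 * dist H w p.1 p.2).
by exists (fun p => mu p.1 * nu p.2); split => //; exact: coupling_prod.
Qed.

(* Mixing near-optimal plans for the two pairs of marginals gives a plan for
   the mixed marginals whose cost is the mixed cost. *)
Lemma W1_convex mu1 nu1 mu2 nu2 t :
  prob mu1 -> prob nu1 -> prob mu2 -> prob nu2 -> 0 <= t <= 1 ->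
  W1 H w (fun z => (1 - t) * mu1 z + t * mu2 z)
         (fun z => (1 - t) * nu1 z + t * nu2 z)
  <= (1 - t) * W1 H w mu1 nu1 + t * W1 H w mu2 nu2.
Proof.
move=> pmu1 pnu1 pmu2 pnu2 t01; have /andP[t0 t1] := t01.
have mixed_plan c1 c2 : transport_costs mu1 nu1 c1 -> transport_costs mu2 nu2 c2 ->
    W1 H w (fun z => (1 - t) * mu1 z + t * mu2 z)
           (fun z => (1 - t) * nu1 z + t * nu2 z) <= (1 - t) * c1 + t * c2.
  move=> [pi1 [cpl1 ->]] [pi2 [cpl2 ->]].
  apply: ge_inf; first by exists 0 => r /transport_costs_ge0.
  exists (fun p => (1 - t) * pi1 p + t * pi2 p).
  split; first exact: coupling_convex.
  by rewrite !mulr_sumr -big_split /=; apply: eq_bigr => p _; ring.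
apply/ler_addgt0Pr => e e0.
have [c1 Tc1 c1_lt] := inf_adherent e0 (transport_costs_has_inf pmu1 pnu1).
have [c2 Tc2 c2_lt] := inf_adherent e0 (transport_costs_has_inf pmu2 pnu2).
apply: (le_trans (mixed_plan c1 c2 Tc1 Tc2)); rewrite /W1 -!/(transport_costs _ _).
have : (1 - t) * c1 <= (1 - t) * (inf (transport_costs mu1 nu1) + e).
  by apply: ler_wpM2l; [lra | exact: ltW].
have : t * c2 <= t * (inf (transport_costs mu2 nu2) + e).
  by apply: ler_wpM2l => //; exact: ltW.
lra.
Qed.

Lemma W1_mu_meas_convex x y : covered x -> covered y ->
  convex_on01 (fun alpha => W1 H w (mu_meas H w alpha x) (mu_meas H w alpha y)).
Proof.
move=> xcov ycov a b t a01 b01 t01.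
have mix z : mu_meas H w ((1 - t) * a + t * b) z =
    (fun z' => (1 - t) * mu_meas H w a z z' + t * mu_meas H w b z z').
  by apply/funext => z'; exact: mu_meas_affine.
by rewrite !mix; apply: W1_convex => //; exact: mu_meas_prob.
Qed.

End Hypergraph.

Theorem mainTheorem1 (R : realType) (V : finType) (H : {set {set V}})
  (w : {set V} -> R) :
  weights_pos H w -> edges_ge2 H -> connected_hg H ->
  (forall u v : V, u != v -> concave_on01 (fun alpha => kappa_vert H w alpha u v)) /\
  (forall h : {set V}, h \in H -> concave_on01 (fun alpha => kappa_edge H w alpha h)).
Proof.
move=> w_gt0 card_ge2 conn; split.
  move=> u v uv; have [s /hyperpath_covered [ucov vcov]] := conn u v uv.
  apply: concave_on01_one_sub_div; first exact: dist_ge0.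
  exact: W1_mu_meas_convex.
move=> h hH; have edge_covered x : x \in h -> covered H x by exists h.
apply: concave_on01_one_sub_div; first exact: Lh_ge0.
apply: convex_on01_sum => x xh; apply: convex_on01_sum => y /andP[yh _].
by apply: W1_mu_meas_convex => //; exact: edge_covered.
Qed.
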